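(* (1) Let $\mathbf s:\mathcal X\to\{0,1\}^m$ be a selection rule and $\mathbf s':\{0,1\}^m\times\mathcal X\to\{0,1\}^m$ an extended selection rule such that $\mathbf s'(\mathbf w,\mathbf X)\preceq\mathbf w$ for all $\mathbf w\in\{0,1\}^m$. If both $\mathbf s$ and $\mathbf s'$ are stable, then the composition $\mathbf s'\circ\mathbf s$, defined by $(\mathbf s'\circ\mathbf s)(\mathbf X)=\mathbf s'(\mathbf s(\mathbf X),\mathbf X)$, is stable. (2) Let $\mathbf s,\mathbf s':\mathcal X\to\{0,1\}^m$ be two selection rules. If both are stable, then their intersection $\mathbf s\cap\mathbf s'$, defined as the componentwise product $(\mathbf s\cap\mathbf s')_i(\mathbf X)=s_i(\mathbf X)s_i'(\mathbf X)$, is stable.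
   Context: Data $\mathbf X=(X_0,X_1,\dots,X_m)\in\mathcal X$, where $X_i$ is the data for task $i$ and $X_0$ is extra data; $\mathbf X_{-i}$ denotes $\mathbf X$ with $X_i$ removed (it includes $X_0$). Selection rules are deterministic. A selection rule $\mathbf s:\mathcal X\to\{0,1\}^m$ is stable if for every $i$, $\mathbf S_{-i}=\mathbf s_{-i}(\mathbf X)$ is variationally independent of $X_i$ given $S_i=1$ and $\mathbf X_{-i}$; concretely, for all $\mathbf x,\mathbf x'\in\mathcal X$ with $\mathbf x_{-i}=\mathbf x'_{-i}$ and $s_i(\mathbf x)=s_i(\mathbf x')=1$, one has $\mathbf s(\mathbf x)=\mathbf s(\mathbf x')$. An extended selection rule $\mathbf s':\{0,1\}^m\times\mathcal X\to\{0,1\}^m$ is stable if $\mathbf s'(\mathbf w,\cdot)$ is stable for every $\mathbf w\in\{0,1\}^m$. $\mathbf S\preceq\mathbf S'$ means componentwise $\le$. *)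

From mathcomp Require Import all_boot.
Set Implicit Arguments. Unset Strict Implicit. Unset Printing Implicit Defensive.

(* Data X = (X_0, X_1, ..., X_m): coordinate [None] is the extra data X_0,
   coordinate [Some i] (i : 'I_m) is the data X_i of task i (0-indexed).
   Coordinate types D may differ; the sample space calX is a subset
   (predicate) of the product of the coordinate spaces. *)
Definition data (m : nat) (D : option 'I_m -> Type) := forall j : option 'I_m, D j.

Definition eq_minus (m : nat) (D : option 'I_m -> Type) (i : 'I_m)
  (x x' : data D) : Prop := forall j, j <> Some i -> x j = x' j.

Definition selvec (m : nat) := {ffun 'I_m -> bool}.

Definition sel_le (m : nat) (S S' : selvec m) : Prop := forall i, S i <= S' i.

Definition stable (m : nat) (D : option 'I_m -> Type) (calX : data D -> Prop)
  (s : data D -> selvec m) : Prop :=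
  forall (i : 'I_m) (x x' : data D), calX x -> calX x' ->
    eq_minus i x x' -> s x i = true -> s x' i = true -> s x = s x'.

Definition ext_stable (m : nat) (D : option 'I_m -> Type) (calX : data D -> Prop)
  (s' : selvec m -> data D -> selvec m) : Prop :=
  forall w : selvec m, stable calX (s' w).

Definition compose_sel (m : nat) (D : option 'I_m -> Type)
  (s' : selvec m -> data D -> selvec m) (s : data D -> selvec m) : data D -> selvec m :=
  fun x => s' (s x) x.

Definition inter_sel (m : nat) (D : option 'I_m -> Type)
  (s s' : data D -> selvec m) : data D -> selvec m :=
  fun x => [ffun i => s x i && s' x i].

From mathcomp Require Import all_boot.

Lemma sel_le_true (m : nat) (S S' : selvec m) (i : 'I_m) :
  sel_le S S' -> S i -> S' i.
Proof. by move=> /(_ i); case: (S i); case: (S' i). Qed.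

Section StableSelection.

Variables (m : nat) (D : option 'I_m -> Type) (calX : data D -> Prop).

(* Selection by s' forces selection by s, so the stability of s first
   identifies the inputs s x and s x', after which s' (s x) is stable. *)
Lemma stable_compose_sel (s : data D -> selvec m)
    (s' : selvec m -> data D -> selvec m) :
  (forall w x, calX x -> sel_le (s' w x) w) ->
  stable calX s -> ext_stable calX s' -> stable calX (compose_sel s' s).
Proof.
move=> s'_le stable_s stable_s' i x x' Xx Xx' eq_x.
rewrite /compose_sel => sel_x sel_x'.
have s_x : s x i by exact: sel_le_true (s'_le _ _ Xx) sel_x.
have s_x' : s x' i by exact: sel_le_true (s'_le _ _ Xx') sel_x'.
rewrite (stable_s i x x' Xx Xx' eq_x s_x s_x') in sel_x *.
exact: (stable_s' (s x') i x x' Xx Xx' eq_x sel_x sel_x').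
Qed.

Lemma stable_inter_sel (s s' : data D -> selvec m) :
  stable calX s -> stable calX s' -> stable calX (inter_sel s s').
Proof.
move=> stable_s stable_s' i x x' Xx Xx' eq_x.
rewrite /inter_sel !ffunE => /andP[s_x s'_x] /andP[s_x' s'_x'].
by rewrite (stable_s i x x' Xx Xx' eq_x s_x s_x')
  (stable_s' i x x' Xx Xx' eq_x s'_x s'_x').
Qed.

End StableSelection.

Theorem proposition2 (m : nat) (D : option 'I_m -> Type) (calX : data D -> Prop) :
  (forall (s : data D -> selvec m) (s' : selvec m -> data D -> selvec m),
      (forall w x, calX x -> sel_le (s' w x) w) ->
      stable calX s -> ext_stable calX s' ->
      stable calX (compose_sel s' s))
  /\
  (forall s s' : data D -> selvec m,
      stable calX s -> stable calX s' -> stable calX (inter_sel s s')).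
Proof.
split; [exact: stable_compose_sel | exact: stable_inter_sel].
Qed.
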